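(* Consider online multiclass classification with an arbitrary feedback graph $\mathcal{G}=([K],\mathcal{E})$, and suppose that for every round $t$, $\ell_t=\ell(\cdot,\mathbf{x}_t,y_t)$ is a regular surrogate loss with respect to $\ell$ with constant $L$. Suppose the OCO algorithm $\mathcal{A}$ satisfies, for some $h:\mathcal{W}\to\mathbb{R}_+$ and every $\mathbf{U}\in\mathcal{W}$, $\sum_{t=1}^T(\widehat\ell_t(\mathbf{W}_t)-\widehat\ell_t(\mathbf{U}))\le h(\mathbf{U})\sqrt{\sum_{t=1}^T\|\widehat{\mathbf{g}}_t\|^2}$ with $\widehat{\mathbf{g}}_t=v_t\nabla\ell_t(\mathbf{W}_t)$. Then for any realization of the randomized predictions $y_1',\dots,y_T'$, Gappletron run on $\mathcal{G}$ with $\mathcal{A}$ and a gap map $a:\mathbb{R}^{K\times d}\times\mathbb{R}^d\to[0,1]$ satisfying $a(\mathbf{W}_t,\mathbf{x}_t)=\ell(\mathbf{W}_t,\mathbf{x}_t,y_t^\star)$ satisfies, for all $\mathbf{U}\in\mathcal{W}$, $$\sum_{t=1}^T\sum_{y\in[K]}p_t'(y)\mathbb{1}[y\ne y_t]\le\sum_{t=1}^T\widehat\ell_t(\mathbf{U})+\sum_{t=1}^T\gamma_t+\inf_{\eta>0}\Big\{\frac{h(\mathbf{U})^2}{2\eta}+\sum_{t=1}^T\Big(\frac{K-1}{K}\ell_t(\mathbf{W}_t)-v_t\ell_t(\mathbf{W}_t)+\eta v_t^2L\ell_t(\mathbf{W}_t)\Big)\Big\}.$$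
   Context: Setting: for $t=1,\dots,T$ an oblivious adversary fixes $\mathbf{x}_t\in\mathbb{R}^d$ and $y_t\in[K]=\{1,\dots,K\}$; the learner sees $\mathbf{x}_t$ and predicts $y_t'\in[K]$. A feedback graph is a directed graph $\mathcal{G}=([K],\mathcal{E})$ in which every node has at least one incoming edge (self-loops allowed); $\mathrm{out}(y')=\{y:(y',y)\in\mathcal{E}\}$. After predicting $y_t'$ the learner observes $(y,\mathbb{1}[y\ne y_t])$ for $y\in\mathrm{out}(y_t')$; if a node has $K-1$ outgoing edges the missing edge is added. $\mathcal{Q}=\{y':\mathrm{out}(y')=[K]\}$ (revealing actions, possibly empty). A dominating set is $S\subseteq[K]$ such that every $y\in[K]$ lies in $\mathrm{out}(y')$ for some $y'\in S$; $\rho$ is the minimum size of a dominating set and $S$ is a minimum dominating set. $\mathbf{1}$ all-ones vector, $\mathbf{1}_S$ indicator of $S$, $\mathbf{e}_k$ basis vectors of $\mathbb{R}^K$; $P_t$ is probability conditional on past predictions and feedback. Predictors $\mathbf{W}\in\mathcal{W}\subseteq\mathbb{R}^{K\times d}$ ($\mathcal{W}$ convex), rows $\mathbf{W}^k$, identified with vectors of $\mathbb{R}^{Kd}$; $\|\cdot\|$ a fixed norm on $\mathbb{R}^{Kd}$. $\ell:\mathcal{W}\times\mathbb{R}^d\times[K]\to\mathbb{R}_+$ is convex in $\mathbf{W}$ with $\frac{K-1}{K}\ell(\mathbf{W},\mathbf{x},y)+\frac1K\ell(\mathbf{W},\mathbf{x},y^\star)\ge1$ for all $\mathbf{W},\mathbf{x}$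 and $y\ne y^\star:=\arg\max_k\langle\mathbf{W}^k,\mathbf{x}\rangle$; $\ell_t$ is regular with constant $L>0$ if moreover $\|\nabla\ell_t(\mathbf{W})\|^2\le2L\ell_t(\mathbf{W})$ for all $\mathbf{W}\in\mathcal{W}$. Gappletron (inputs $\mathcal{Q}$, $S$, OCO algorithm $\mathcal{A}$ on $\mathcal{W}$, $\gamma\ge0$, gap map $a$): $\mathbf{W}_1$ from $\mathcal{A}$; at round $t$: $y_t^\star=\arg\max_k\langle\mathbf{W}_t^k,\mathbf{x}_t\rangle$; $\gamma_t=0$ if $y_t^\star\in\mathcal{Q}$, else $\gamma_t=\min\{\tfrac12,\gamma/\sqrt{|\{s\le t:y_s^\star\notin\mathcal{Q}\}|}\}$; $a_t=a(\mathbf{W}_t,\mathbf{x}_t)$; $\zeta_t=\mathbb{1}[\gamma_t\le a_t]$; $\mathbf{p}_t'=(1-\zeta_ta_t-(1-\zeta_t)\gamma_t)\mathbf{e}_{y_t^\star}+\zeta_ta_t\frac1K\mathbf{1}+(1-\zeta_t)\frac{\gamma_t}{\rho}\mathbf{1}_S$; predict $y_t'\sim\mathbf{p}_t'$; $v_t=\mathbb{1}[y_t\in\mathrm{out}(y_t')]/P_t(y_t\in\mathrm{out}(y_t'))$; $\widehat\ell_t(\mathbf{W})=v_t\ell_t(\mathbf{W})$ is fed to $\mathcal{A}$, which returns $\mathbf{W}_{t+1}$. *)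

From HB Require Import structures.
From mathcomp Require Import all_boot all_order all_algebra.
From mathcomp Require Import all_classical all_reals all_analysis.
Set Implicit Arguments. Unset Strict Implicit. Unset Printing Implicit Defensive.
Import Order.TTheory GRing.Theory Num.Theory.
Import numFieldNormedType.Exports.
Local Open Scope ring_scope.


Section Gappletron.
Variables (R : realType) (K d : nat).
Local Notation Mx := 'M[R]_(K, d).
Local Notation Xv := 'rV[R]_d.

Definition score (W : Mx) (x : Xv) (k : 'I_K) : R := \sum_(j < d) W k j * x ord0 j.

Definition is_argmax_rule (amax : Mx -> Xv -> 'I_K) : Prop :=
  forall W x k, score W x k <= score W x (amax W x).

(* Frobenius-type pairing, identifying 'M_(K,d) with R^{Kd} *)
Definition mxdot (G H : Mx) : R := \sum_(i < K) \sum_(j < d) G i j * H i j.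

Definition is_gradient (f : Mx -> R) (W G : Mx) : Prop :=
  differentiable f W /\ forall H : Mx, 'd f W H = mxdot G H.

Definition is_norm (N : Mx -> R) : Prop :=
  [/\ forall u, 0 <= N u, forall u, N u = 0 -> u = 0,
      forall a u, N (a *: u) = `|a| * N u & forall u v, N (u + v) <= N u + N v].

Definition convex_mxset (S : set Mx) : Prop :=
  forall U V (lam : R), S U -> S V -> 0 <= lam <= 1 -> S (lam *: U + (1 - lam) *: V).

Definition convex_on (S : set Mx) (f : Mx -> R) : Prop :=
  forall U V (lam : R), S U -> S V -> 0 <= lam <= 1 ->
    f (lam *: U + (1 - lam) *: V) <= lam * f U + (1 - lam) * f V.

Definition feedback_graph (E : rel 'I_K) : Prop := forall y, exists y', E y' y.

Definition outn (E : rel 'I_K) (y' : 'I_K) : {set 'I_K} :=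
  if #|[set y | E y' y]| == K.-1 then [set: 'I_K] else [set y | E y' y].

Definition revealing (E : rel 'I_K) : {set 'I_K} := [set y' | outn E y' == [set: 'I_K]].

Definition dominating (E : rel 'I_K) (S : {set 'I_K}) : Prop :=
  forall y, exists2 y', y' \in S & y \in outn E y'.

Definition min_dominating (E : rel 'I_K) (S : {set 'I_K}) : Prop :=
  dominating E S /\ forall S', dominating E S' -> (#|S| <= #|S'|)%N.

(* gamma_t, for rounds t = 1, 2, ... *)
Definition gamma_t (Q : {set 'I_K}) (gam : R) (ystar : nat -> 'I_K) (t : nat) : R :=
  if ystar t \in Q then 0
  else Num.min (1 / 2) (gam / Num.sqrt (count (fun s => ystar s \notin Q) (iota 1 t))%:R).

Definition pdist (S : {set 'I_K}) (ys : 'I_K) (g a : R) (y : 'I_K) : R :=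
  let z : R := (g <= a)%R%:R in
  (1 - z * a - (1 - z) * g) * (y == ys)%:R + z * a / K%:R
  + (1 - z) * g / #|S|%:R * (y \in S)%:R.

Definition pobs (E : rel 'I_K) (p : 'I_K -> R) (yt : 'I_K) : R :=
  \sum_(y' < K) p y' * (yt \in outn E y')%:R.

Definition vweight (E : rel 'I_K) (p : 'I_K -> R) (yt y't : 'I_K) : R :=
  (yt \in outn E y't)%:R / pobs E p yt.

End Gappletron.

From HB Require Import structures.
From mathcomp Require Import all_boot all_order all_algebra.
From mathcomp Require Import all_classical all_reals all_analysis.
From mathcomp Require Import ring lra.
Set Implicit Arguments. Unset Strict Implicit. Unset Printing Implicit Defensive.
Import Order.TTheory GRing.Theory Num.Theory.
Import numFieldNormedType.Exports.
Local Open Scope ring_scope.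

(* In each round the expected number of mistakes of p'_t is at most
   (K-1)/K l_t(W_t) + gamma_t: since a_t = l_t(W_t, y*_t), this is the surrogate
   inequality when p'_t explores uniformly (gamma_t <= a_t), and a_t < gamma_t
   covers the other case.  The remaining sum of (K-1)/K l_t(W_t) - lhat_t(U) is
   controlled by the OCO regret bound, where the self-bounding property gives
   sum ||ghat_t||^2 <= 2 L X with X = sum v_t^2 l_t(W_t), and by AM-GM,
   h sqrt(2 L X) <= h^2 / (2 eta) + eta L X for every eta > 0. *)

Lemma sum_mul_delta (R : pzSemiRingType) (n : nat) (c : R) (j : 'I_n) :
  \sum_(k < n) c * (k == j)%:R = c.
Proof.
under eq_bigr do rewrite mulr_natr mulrb.
by rewrite -big_mkcond big_pred1_eq.
Qed.

Section Round.
Variables (R : realType) (K : nat) (S : {set 'I_K}).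

Hypothesis S_gt0 : (0 < #|S|)%N.

Lemma pdist_sum1 (ys : 'I_K) (g a : R) : \sum_(k < K) pdist S ys g a k = 1.
Proof.
have K_gt0 : (0 < K)%N := leq_ltn_trans (leq0n ys) (ltn_ord ys).
have card_S : \sum_(k < K) (k \in S)%:R = #|S|%:R :> R.
  by rewrite -sum1_card natr_sum [RHS]big_mkcond; apply: eq_bigr => k _; case: (_ \in _).
rewrite !big_split /= sum_mul_delta sumr_const card_ord -big_distrr /= card_S.
by rewrite -[_ *+ K]mulr_natr !divfK ?pnatr_eq0 -?lt0n //; ring.
Qed.

Lemma pdist_mistake (ys yt : 'I_K) (g a : R) :
  \sum_(k < K) pdist S ys g a k * (k != yt)%:R = 1 - pdist S ys g a yt.
Proof.
rewrite -[in RHS](pdist_sum1 ys g a) [in RHS](bigD1 yt) //= [LHS](bigD1 yt) //= eqxx mulr0 add0r.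
rewrite addrC addrK; apply: eq_bigr => k ->; exact: mulr1.
Qed.

Lemma pdist_mistake_le (l : 'I_K -> R) (ys yt : 'I_K) (g : R) :
  0 <= g -> (forall k, 0 <= l k) ->
  (forall k, k != ys -> 1 <= (K%:R - 1) / K%:R * l k + 1 / K%:R * l ys) ->
  \sum_(k < K) pdist S ys g (l ys) k * (k != yt)%:R <= (K%:R - 1) / K%:R * l yt + g.
Proof.
move=> g_ge0 l_ge0 surrogate.
have K_gt0 : 0 < K%:R :> R by rewrite ltr0n (leq_ltn_trans (leq0n ys) (ltn_ord ys)).
have invK_gt0 : 0 < K%:R^-1 :> R by rewrite invr_gt0.
have invK_le1 : K%:R^-1 <= 1 :> R by rewrite invf_le1 // ler1n -(ltr0n R).
have coefK : (K%:R - 1) / K%:R = 1 - K%:R^-1 :> R by rewrite mulrBl divff ?gt_eqF // mul1r.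
have explore_ge0 k : 0 <= g / #|S|%:R * (k \in S)%:R by rewrite !mulr_ge0 ?invr_ge0.
have := l_ge0 ys; have := l_ge0 yt.
rewrite pdist_mistake /pdist coefK; set iK := K%:R^-1.
have la_le : l ys * iK <= l ys by rewrite ler_piMr.
have la_ge0 : 0 <= l ys * iK by rewrite mulr_ge0 // ltW.
case: (eqVneq yt ys) => [->|yt_ys] /=; rewrite ?eqxx ?mulr1 ?mulr0.
- have := explore_ge0 ys.
  by case: (boolP (g <= l ys)) => _ /=; rewrite ?subrr ?subr0 ?mul0r ?mul1r; lra.
- (* when exploring on S, a/K in the surrogate bound is below a < g *)
  have := explore_ge0 yt; have := surrogate yt yt_ys; rewrite coefK mul1r -/iK.
  by case: (boolP (g <= l ys)); rewrite -?ltNge /= ?subrr ?subr0 ?mul0r ?mul1r; lra.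
Qed.

End Round.

Lemma gamma_t_ge0 (R : realType) K (Q : {set 'I_K}) (gam : R) ystar t :
  0 <= gam -> 0 <= gamma_t Q gam ystar t.
Proof.
move=> gam_ge0; rewrite /gamma_t; case: ifP => _ //.
by rewrite le_min !divr_ge0 ?sqrtr_ge0.
Qed.

Lemma mul_sqrtr_le_AMGM (R : rcfType) (eta c Y : R) :
  0 < eta -> 0 <= Y -> c * Num.sqrt Y <= c ^+ 2 / (2 * eta) + eta * Y / 2.
Proof.
move=> eta_gt0 Y_ge0; rewrite -subr_ge0.
have -> : c ^+ 2 / (2 * eta) + eta * Y / 2 - c * Num.sqrt Y
    = (c - eta * Num.sqrt Y) ^+ 2 / (2 * eta).
  by rewrite sqrrB exprMn sqr_sqrtr //; field; rewrite gt_eqF.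
by rewrite divr_ge0 ?sqr_ge0 // mulr_ge0 // ltW.
Qed.

Lemma le_mul_sqrt_AMGM (R : rcfType) (c eta B Y Z : R) :
  0 <= c -> 0 < eta -> 0 <= B -> Y <= 2 * B -> Z <= c * Num.sqrt Y ->
  Z <= c ^+ 2 / (2 * eta) + eta * B.
Proof.
move=> c_ge0 eta_gt0 B_ge0 le_YB /le_trans; apply.
have B2_ge0 : 0 <= 2 * B by rewrite mulr_ge0.
have -> : eta * B = eta * (2 * B) / 2 by field.
apply: le_trans (mul_sqrtr_le_AMGM c eta_gt0 B2_ge0).
by rewrite ler_wpM2l ?ler_sqrt.
Qed.

Lemma le_inf_pos (R : realType) (c : R) (f : R -> R) :
  (forall eta, 0 < eta -> c <= f eta) ->
  c <= inf [set f eta | eta in [set eta | 0 < eta]]%classic.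
Proof.
move=> le_f; apply: lb_le_inf; first by exists (f 1), 1 => //=.
by move=> _ [eta eta_gt0 <-]; exact: le_f.
Qed.

Theorem lemma2 (R : realType) (K d T : nat)
  (E : rel 'I_K) (S : {set 'I_K})
  (Wset : set 'M[R]_(K, d)) (N : 'M[R]_(K, d) -> R)
  (loss : 'M[R]_(K, d) -> 'rV[R]_d -> 'I_K -> R)
  (gradl : 'M[R]_(K, d) -> 'rV[R]_d -> 'I_K -> 'M[R]_(K, d)) (L : R)
  (amax : 'M[R]_(K, d) -> 'rV[R]_d -> 'I_K)
  (x : nat -> 'rV[R]_d) (y : nat -> 'I_K)
  (A : seq ('M[R]_(K, d) -> R) -> 'M[R]_(K, d)) (gam : R)
  (a : 'M[R]_(K, d) -> 'rV[R]_d -> R) (h : 'M[R]_(K, d) -> R)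
  (W : nat -> 'M[R]_(K, d)) (y' : nat -> 'I_K) :
  feedback_graph E ->
  min_dominating E S ->
  convex_mxset Wset ->
  is_norm N ->
  is_argmax_rule amax ->
  (forall V z k, Wset V -> 0 <= loss V z k) ->
  (forall z k, convex_on Wset (fun V => loss V z k)) ->
  (forall V z k, Wset V -> k != amax V z ->
     1 <= (K%:R - 1) / K%:R * loss V z k + 1 / K%:R * loss V z (amax V z)) ->
  (forall V z k, Wset V -> is_gradient (fun U => loss U z k) V (gradl V z k)) ->
  0 < L ->
  (forall t, (1 <= t <= T)%N -> forall V, Wset V ->
     N (gradl V (x t) (y t)) ^+ 2 <= 2 * L * loss V (x t) (y t)) ->
  0 <= gam ->
  (forall V z, 0 <= a V z <= 1) ->
  (forall hist, Wset (A hist)) ->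
  let ystar t := amax (W t) (x t) in
  let Q := revealing E in
  let gt t := gamma_t Q gam ystar t in
  let p t := pdist S (ystar t) (gt t) (a (W t) (x t)) in
  let v t := vweight E (p t) (y t) (y' t) in
  let lhat t V := v t * loss V (x t) (y t) in
  (forall t, (1 <= t <= T)%N -> W t = A [seq lhat s | s <- iota 1 t.-1]) ->
  (forall t, (1 <= t <= T)%N -> 0 < p t (y' t)) ->
  (forall t, (1 <= t <= T)%N -> a (W t) (x t) = loss (W t) (x t) (ystar t)) ->
  (forall U, Wset U -> 0 <= h U) ->
  (forall U, Wset U ->
     \sum_(1 <= t < T.+1) (lhat t (W t) - lhat t U)
       <= h U * Num.sqrt (\sum_(1 <= t < T.+1) N (v t *: gradl (W t) (x t) (y t)) ^+ 2)) ->
  forall U, Wset U ->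
    \sum_(1 <= t < T.+1) \sum_(k < K) p t k * (k != y t)%:R
      <= \sum_(1 <= t < T.+1) lhat t U + \sum_(1 <= t < T.+1) gt t
         + inf [set h U ^+ 2 / (2 * eta)
                    + \sum_(1 <= t < T.+1)
                        ((K%:R - 1) / K%:R * loss (W t) (x t) (y t)
                         - v t * loss (W t) (x t) (y t)
                         + eta * v t ^+ 2 * L * loss (W t) (x t) (y t))
               | eta in [set eta : R | 0 < eta]]%classic.
Proof.
move=> _ [dom_S _] _ [_ _ N_scale _] _ loss_ge0 _ surrogate _ L_gt0 self_bound gam_ge0 _ A_in
  ystar Q gt p v lhat W_def _ a_def h_ge0 regret U U_in.
have S_gt0 : (0 < #|S|)%N by have [k k_in _] := dom_S (y 0%N); apply/card_gt0P; exists k.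
have W_in t : (1 <= t <= T)%N -> Wset (W t) by move/W_def ->.
set X := \sum_(1 <= t < T.+1) v t ^+ 2 * loss (W t) (x t) (y t).
have LX_ge0 : 0 <= L * X.
  apply: mulr_ge0; first exact: ltW.
  rewrite /X big_nat; apply: sumr_ge0 => t t_in.
  by rewrite mulr_ge0 ?sqr_ge0 //; exact: loss_ge0 (W_in t t_in).
have grad_est : \sum_(1 <= t < T.+1) N (v t *: gradl (W t) (x t) (y t)) ^+ 2 <= 2 * (L * X).
  rewrite mulrA /X big_distrr /=; apply: ler_sum_nat => t t_in.
  rewrite N_scale exprMn real_normK ?num_real // [leRHS]mulrCA.
  by rewrite ler_wpM2l ?sqr_ge0 //; exact: self_bound (W_in t t_in).
have mistakes : \sum_(1 <= t < T.+1) \sum_(k < K) p t k * (k != y t)%:R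
    <= \sum_(1 <= t < T.+1) ((K%:R - 1) / K%:R * loss (W t) (x t) (y t))
       + \sum_(1 <= t < T.+1) gt t.
  rewrite -big_split; apply: ler_sum_nat => t t_in /=.
  rewrite /p a_def //; apply: pdist_mistake_le => //; first exact: gamma_t_ge0.
    by move=> k; exact: loss_ge0 (W_in t t_in).
  by move=> k; exact: surrogate (W_in t t_in).
set best_eta := inf _.
suff : \sum_(1 <= t < T.+1) \sum_(k < K) p t k * (k != y t)%:R
    - \sum_(1 <= t < T.+1) lhat t U - \sum_(1 <= t < T.+1) gt t <= best_eta by lra.
apply: le_inf_pos => eta eta_gt0.
have := le_mul_sqrt_AMGM (h_ge0 U U_in) eta_gt0 LX_ge0 grad_est (regret U U_in).
rewrite !big_split /= !sumrN.
have -> : \sum_(1 <= t < T.+1) eta * v t ^+ 2 * L * loss (W t) (x t) (y t) = eta * (L * X).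
  by rewrite /X !big_distrr; apply: eq_bigr => t _ /=; ring.
(* hiding the let-bodies keeps lra from unfolding them when comparing atoms *)
move: mistakes; rewrite /lhat; clearbody v p gt X.
lra.
Qed.
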